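(* $\mathrm{Win}_\mathcal{A} \equiv_W \mathrm{LPO}$.
   Context: Weihrauch reducibility: for partial multivalued maps $f,g$ between represented spaces (spaces $(X,\delta_X)$ with $\delta_X:\subseteq\mathbb{N}^\mathbb{N}\to X$ a partial surjection), $f\leq_W g$ iff there are computable partial $K,H:\subseteq\mathbb{N}^\mathbb{N}\to\mathbb{N}^\mathbb{N}$ such that for every realizer $G$ of $g$, $p\mapsto K(\langle p,G(H(p))\rangle)$ realizes $f$ (a realizer $F$ of $f:X\rightrightarrows Y$ satisfies $\delta_Y(F(p))\in f(\delta_X(p))$ for $\delta_X(p)\in\mathrm{dom}(f)$); $\equiv_W$ is the induced equivalence. $\mathrm{LPO}:\{0,1\}^\mathbb{N}\to\{0,1\}$ maps $p$ to $1$ iff $p=0^\mathbb{N}$. $\mathcal{A}$ denotes the closed subsets of $\{0,1\}^\mathbb{N}$, a closed set being named by an enumeration of words $w$ with $\bigcup w\{0,1\}^\mathbb{N}$ equal to its complement. Games: a win/lose game has two players 1 and 2, choices $\{0,1\}$, a turn function $d:\{0,1\}^*\to\{1,2\}$ (given as lookup table) and a winning set for player 1 (player 2 wins on the complement); a strategy of a player is a function from the histories $d^{-1}(i)$ to $\{0,1\}$, and it is winning if every play consistent with it is won by that player. $\mathrm{Win}_\Gamma$ takes a win/lose game whose winning set for player 1 is given by a $\Gamma$-name and outputs which player has a winning strategy. *)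

From Stdlib Require Import Arith List Lia Classical FunctionalExtensionality
  PropExtensionality ProofIrrelevance.
Import ListNotations.
Set Implicit Arguments.

Definition baire := nat -> nat.

Definition bpair (p q : baire) : baire :=
  fun n => if Nat.even n then p (Nat.div2 n) else q (Nat.div2 n).
Definition bfst (p : baire) : baire := fun n => p (2 * n).
Definition bsnd (p : baire) : baire := fun n => p (2 * n + 1).

Inductive rec : Type :=
| RZero | RSucc | RProj (i : nat)
| RComp (f : rec) (gs : list rec)
| RPrec (f g : rec)
| RMu (f : rec).

Inductive reval : rec -> list nat -> nat -> Prop :=
| ev_zero args : reval RZero args 0
| ev_succ args : reval RSucc args (S (hd 0 args))
| ev_proj i args : reval (RProj i) args (nth i args 0)
| ev_comp f gs args vs v :
    revals gs args vs -> reval f vs v -> reval (RComp f gs) args v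
| ev_prec0 f g args v : reval f args v -> reval (RPrec f g) (0 :: args) v
| ev_precS f g n args r v :
    reval (RPrec f g) (n :: args) r -> reval g (n :: r :: args) v ->
    reval (RPrec f g) (S n :: args) v
| ev_mu f args v :
    reval f (v :: args) 0 ->
    (forall m, m < v -> exists r, reval f (m :: args) (S r)) ->
    reval (RMu f) args v
with revals : list rec -> list nat -> list nat -> Prop :=
| evs_nil args : revals nil args nil
| evs_cons g gs args v vs :
    reval g args v -> revals gs args vs -> revals (g :: gs) args (v :: vs).

Definition rec_computable2 (h : nat -> nat -> nat) : Prop :=
  exists c : rec, forall a b, reval c [a; b] (h a b).

Definition cpair (x y : nat) : nat := (x + y) * (x + y + 1) / 2 + y.
Fixpoint lcode (l : list nat) : nat :=
  match l with nil => 0 | a :: l' => S (cpair a (lcode l')) end.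

Definition bprefix (p : baire) (k : nat) : list nat := map p (seq 0 k).

(* A partial F :⊆ N^N -> N^N (None = undefined) is computable iff a
   type-2 machine computes it on its domain; equivalently there is a total
   computable h with h(w,n) = 0 meaning "no output yet" and h(w,n) = v+1
   meaning "the n-th output symbol is v", consistent on prefixes of p. *)
Definition computable (F : baire -> option baire) : Prop :=
  exists h, rec_computable2 h /\
    forall p q, F p = Some q -> forall n,
      (exists k, h (lcode (bprefix p k)) n <> 0) /\
      (forall k, h (lcode (bprefix p k)) n <> 0 ->
                 h (lcode (bprefix p k)) n = S (q n)).

(* delta :⊆ N^N -> X is given by its graph [names]; it is single-valued
   and surjective. *)
Record rep_space := {
  carrier :> Type;
  names : baire -> carrier -> Prop;
  names_fun : forall p x y, names p x -> names p y -> x = y;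
  names_surj : forall x, exists p, names p x }.

(* multivalued partial maps X ⇉ Y are relations; dom f = {x | exists y, f x y} *)
Definition realizes {X Y : rep_space} (F : baire -> option baire)
  (f : X -> Y -> Prop) : Prop :=
  forall p x, names X p x -> (exists y, f x y) ->
    exists q, F p = Some q /\ exists y, names Y q y /\ f x y.

Definition W_le {X Y X' Y' : rep_space} (f : X -> Y -> Prop)
  (g : X' -> Y' -> Prop) : Prop :=
  exists H K : baire -> option baire,
    computable H /\ computable K /\
    forall G : baire -> option baire, realizes G g ->
      realizes (fun p => match H p with
                         | Some h => match G h with
                                     | Some r => K (bpair p r)
                                     | None => None end
                         | None => None end) f.

Definition W_equiv {X Y X' Y' : rep_space} (f : X -> Y -> Prop)
  (g : X' -> Y' -> Prop) : Prop := W_le f g /\ W_le g f.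

Definition image_space (T : Type) (nm : baire -> T -> Prop)
  (Hf : forall p x y, nm p x -> nm p y -> x = y) : rep_space.
Proof.
  refine {| carrier := {x : T | exists p, nm p x};
            names := fun p x => nm p (proj1_sig x) |}.
  - intros p [x hx] [y hy]; simpl; intros H1 H2.
    pose proof (Hf _ _ _ H1 H2); subst. f_equal. apply proof_irrelevance.
  - intros [x [p hp]]; exists p; exact hp.
Defined.

Definition Cantor : rep_space.
Proof.
  refine {| carrier := nat -> bool;
            names := fun p x => forall n, p n = (if x n then 1 else 0) |}.
  - intros p x y Hx Hy; apply functional_extensionality; intro n.
    specialize (Hx n); specialize (Hy n).
    destruct (x n), (y n); congruence.
  - intro x; exists (fun n => if x n then 1 else 0); reflexivity.
Defined.

Definition Two : rep_space.
Proof.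
  refine {| carrier := bool;
            names := fun p b => p 0 = (if b then 1 else 0) |}.
  - intros p x y Hx Hy; destruct x, y; congruence.
  - intro b; exists (fun _ => if b then 1 else 0); reflexivity.
Defined.

Definition LPO (x : Cantor) (b : Two) : Prop :=
  b = true <-> (forall n, x n = false).

Inductive player := P1 | P2.

Definition player_code (i : player) : nat := match i with P1 => 1 | P2 => 2 end.
Definition Players : rep_space.
Proof.
  refine {| carrier := player; names := fun p i => p 0 = player_code i |}.
  - intros p x y Hx Hy; cbn in *; destruct x, y; cbn in *; congruence.
  - intro i; exists (fun _ => player_code i); reflexivity.
Defined.

Definition cprefix (x : nat -> bool) (n : nat) : list bool := map x (seq 0 n).

(* standard bijection {0,1}^* -> N (length-lexicographic order):
   w |-> (binary value of 1w) - 1 *)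
Definition widx (w : list bool) : nat :=
  fold_left (fun a (b : bool) => 2 * a + (if b then 1 else 0)) w 1 - 1.

Record game := { turn : list bool -> player; win1 : (nat -> bool) -> Prop }.

(* A-name of a closed set: an enumeration of words (p(n) = 0: no word,
   p(n) = k+1: the k-th word) whose cylinders cover the complement *)
Definition closed_names (q : baire) (A : (nat -> bool) -> Prop) : Prop :=
  forall x, A x <-> (forall n w, q n = S (widx w) -> cprefix x (length w) <> w).

Definition game_names (p : baire) (G : game) : Prop :=
  (forall w, (bfst p (widx w) = 1 /\ turn G w = P1) \/
             (bfst p (widx w) = 2 /\ turn G w = P2)) /\
  closed_names (bsnd p) (win1 G).

Lemma game_names_fun p G H : game_names p G -> game_names p H -> G = H.
Proof.
  destruct G as [d A], H as [e B]; simpl; intros [Hd HA] [He HB].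
  assert (d = e).
  { apply functional_extensionality; intro w.
    destruct (Hd w) as [[? ?]|[? ?]], (He w) as [[? ?]|[? ?]]; simpl in *; congruence. }
  assert (A = B).
  { apply functional_extensionality; intro x; apply propositional_extensionality.
    specialize (HA x); specialize (HB x); simpl in *; tauto. }
  subst; reflexivity.
Qed.

Definition ClosedGames : rep_space := @image_space game game_names game_names_fun.

Definition consistent (d : list bool -> player) (i : player)
  (s : list bool -> bool) (x : nat -> bool) : Prop :=
  forall n, d (cprefix x n) = i -> x n = s (cprefix x n).

Definition winning_strategy (G : game) (i : player) (s : list bool -> bool) : Prop :=
  forall x, consistent (turn G) i s x ->
    match i with P1 => win1 G x | P2 => ~ win1 G x end.

Definition Win_A (G : ClosedGames) (i : Players) : Prop :=
  exists s, winning_strategy (proj1_sig G) i s.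

From Stdlib Require Import Arith List Lia Classical ClassicalEpsilon.
Import ListNotations.
Set Implicit Arguments.

(* Win_A <= LPO.  Call a history forced if player 2 can drive the play from it into one
   of finitely many enumerated cylinders within finitely many moves.  If the empty history
   is forced, player 2 wins with a strategy for the first m moves, coded by a bit string s,
   such that every play of length m consistent with it meets one of the first m cylinders.
   That (m, s) has this property is decidable from a finite prefix of the name of the game,
   and LPO applied to the sequence of these checks tells whether such a pair exists.  If
   the empty history is not forced, player 1 wins by keeping the history unforced: such a
   play avoids every cylinder, so it lies in the closed winning set of player 1.

   LPO <= Win_A.  For x in Cantor space, take the game in which player 1 makes all moves
   and wins iff x = 0^N. *)

(** * Recursive functions on argument lists *)

Definition recursive (F : list nat -> nat) : Prop := exists c, forall l, reval c l (F l).

Lemma recursive_ext F G : (forall l, F l = G l) -> recursive F -> recursive G.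
Proof. intros E [c Hc]; exists c; intro l; rewrite <- E; auto. Qed.

Lemma recursive_proj i : recursive (fun l => nth i l 0).
Proof. exists (RProj i); intro; constructor. Qed.

Lemma recursive_programs Gs :
  Forall recursive Gs -> exists cs, forall l, revals cs l (map (fun G => G l) Gs).
Proof.
  induction 1 as [|G Gs [g Hg] _ [cs Hcs]].
  - exists nil; constructor.
  - exists (g :: cs); constructor; auto.
Qed.

Lemma recursive_comp F Gs :
  recursive F -> Forall recursive Gs -> recursive (fun l => F (map (fun G => G l) Gs)).
Proof.
  intros [f Hf] HG; destruct (recursive_programs HG) as [cs Hcs].
  exists (RComp f cs); intro l; econstructor; eauto.
Qed.

Lemma recursive_comp1 f A :
  recursive (fun a => f (nth 0 a 0)) -> recursive A -> recursive (fun l => f (A l)).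
Proof. intros Hf HA; exact (recursive_comp Hf (Forall_cons _ HA (Forall_nil _))). Qed.

Lemma recursive_succ A : recursive A -> recursive (fun l => S (A l)).
Proof.
  apply (recursive_comp1 S); exists RSucc; intros [|a l]; constructor.
Qed.

Lemma recursive_const n : recursive (fun _ => n).
Proof.
  induction n as [|n IH]; [exists RZero; constructor | exact (recursive_succ IH)].
Qed.

Fixpoint primrec (F G : list nat -> nat) (n : nat) (a : list nat) : nat :=
  match n with 0 => F a | S k => G (k :: primrec F G k a :: a) end.

Lemma recursive_primrec F G N Hs :
  recursive F -> recursive G -> recursive N -> Forall recursive Hs ->
  recursive (fun l => primrec F G (N l) (map (fun H => H l) Hs)).
Proof.
  intros [f Hf] [g Hg] [n Hn] HH; destruct (recursive_programs HH) as [cs Hcs].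
  exists (RComp (RPrec f g) (n :: cs)); intro l; econstructor.
  - constructor; eauto.
  - generalize (N l) (map (fun H => H l) Hs); intro k.
    induction k; intro a; simpl; econstructor; eauto.
Qed.

Lemma recursive_iter f K X :
  recursive (fun a => f (nth 0 a 0)) -> recursive K -> recursive X ->
  recursive (fun l => Nat.iter (K l) f (X l)).
Proof.
  intros Hf HK HX.
  assert (Hstep : recursive (fun a => f (nth 1 a 0))) by exact (recursive_comp1 f Hf (recursive_proj 1)).
  eapply recursive_ext;
    [| exact (recursive_primrec (recursive_proj 0) Hstep HK (Forall_cons _ HX (Forall_nil _)))].
  intro l; simpl; induction (K l); simpl; congruence.
Qed.

Lemma recursive_add A B : recursive A -> recursive B -> recursive (fun l => A l + B l).
Proof.
  intros HA HB.
  eapply recursive_ext;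
    [| exact (recursive_iter S (recursive_succ (recursive_proj 0)) HB HA)].
  intro l; simpl; induction (B l); simpl; lia.
Qed.

Lemma recursive_pred A : recursive A -> recursive (fun l => pred (A l)).
Proof.
  intro HA.
  eapply recursive_ext;
    [| exact (recursive_primrec (recursive_const 0) (recursive_proj 0) HA (Forall_nil _))].
  intro l; simpl; destruct (A l); reflexivity.
Qed.

Lemma recursive_sub A B : recursive A -> recursive B -> recursive (fun l => A l - B l).
Proof.
  intros HA HB.
  eapply recursive_ext;
    [| exact (recursive_iter pred (recursive_pred (recursive_proj 0)) HB HA)].
  intro l; simpl; induction (B l) as [|n IH]; simpl; [lia | rewrite IH; lia].
Qed.

Fixpoint bsum (f : nat -> nat) n := match n with 0 => 0 | S k => bsum f k + f k end.

Lemma bsum_ext f g n : (forall t, t < n -> f t = g t) -> bsum f n = bsum g n.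
Proof. induction n; simpl; intros; auto; rewrite IHn, H; auto. Qed.

Lemma bsum_const c n : bsum (fun _ => c) n = n * c.
Proof. induction n; simpl; lia. Qed.

Lemma bsum_eq0 g N : bsum g N = 0 <-> forall t, t < N -> g t = 0.
Proof.
  induction N as [|N IH]; simpl; [split; intros; auto; lia|].
  rewrite Nat.eq_add_0, IH; split.
  - intros [H1 H2] t Ht; destruct (Nat.eq_dec t N); subst; auto; apply H1; lia.
  - intro H; split; auto.
Qed.

Lemma bsum_ge g N t : t < N -> g t <= bsum g N.
Proof.
  induction N; simpl; intros; [lia|].
  destruct (Nat.eq_dec t N); subst; [lia | specialize (IHN ltac:(lia)); lia].
Qed.

Lemma bsum_neq0 g N : bsum g N <> 0 -> exists t, t < N /\ g t <> 0.
Proof.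
  intro H; apply NNPP; intro H'; apply H, bsum_eq0; intros t Ht.
  destruct (Nat.eq_dec (g t) 0); auto; exfalso; eauto.
Qed.

Lemma bsum_indicator s n : bsum (fun t => if t <? s then 1 else 0) n = Nat.min s n.
Proof. induction n; simpl; [lia|]; rewrite IHn; destruct (Nat.ltb_spec n s); lia. Qed.

Lemma map_nth_seq args pre :
  map (fun j => nth j (pre ++ args) 0) (seq (length pre) (length args)) = args.
Proof.
  revert pre; induction args as [|a args IH]; intro pre; simpl; auto; f_equal.
  - apply nth_middle.
  - specialize (IH (pre ++ [a])); rewrite <- app_assoc, length_app, Nat.add_comm in IH.
    exact IH.
Qed.

Lemma recursive_bsum B N Hs : recursive B -> recursive N -> Forall recursive Hs ->
  recursive (fun l => bsum (fun i => B (i :: map (fun H => H l) Hs)) (N l)).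
Proof.
  intros HB HN HH.
  set (Gs := (fun a => nth 0 a 0) :: map (fun j a => nth j a 0) (seq 2 (length Hs))).
  assert (HGs : Forall recursive Gs).
  { constructor; [apply recursive_proj|].
    apply Forall_forall; intros x Hx; apply in_map_iff in Hx.
    destruct Hx as [j [<- _]]; apply recursive_proj. }
  eapply recursive_ext;
    [| exact (recursive_primrec (recursive_const 0)
                (recursive_add (recursive_proj 1) (recursive_comp HB HGs)) HN HH)].
  intro l; simpl; induction (N l) as [|n IH]; simpl; auto.
  rewrite IH; do 2 f_equal; unfold Gs; simpl; f_equal; rewrite map_map.
  pose proof (map_nth_seq (map (fun H => H l) Hs)
                [n; bsum (fun i => B (i :: map (fun H => H l) Hs)) n]) as E.
  simpl in E; rewrite length_map in E; exact E.
Qed.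

Lemma recursive_bsum0 f N :
  recursive (fun a => f (nth 0 a 0)) -> recursive N -> recursive (fun l => bsum f (N l)).
Proof. intros Hf HN; exact (recursive_bsum Hf HN (Forall_nil _)). Qed.

Lemma recursive_bsum1 f N X :
  recursive (fun a => f (nth 0 a 0) (nth 1 a 0)) -> recursive N -> recursive X ->
  recursive (fun l => bsum (fun i => f i (X l)) (N l)).
Proof. intros Hf HN HX; exact (recursive_bsum Hf HN (Forall_cons _ HX (Forall_nil _))). Qed.

Lemma recursive_bsum2 f N X Y :
  recursive (fun a => f (nth 0 a 0) (nth 1 a 0) (nth 2 a 0)) ->
  recursive N -> recursive X -> recursive Y ->
  recursive (fun l => bsum (fun i => f i (X l) (Y l)) (N l)).
Proof.
  intros Hf HN HX HY.
  exact (recursive_bsum Hf HN (Forall_cons _ HX (Forall_cons _ HY (Forall_nil _)))).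
Qed.

Lemma recursive_bsum3 f N X Y Z :
  recursive (fun a => f (nth 0 a 0) (nth 1 a 0) (nth 2 a 0) (nth 3 a 0)) ->
  recursive N -> recursive X -> recursive Y -> recursive Z ->
  recursive (fun l => bsum (fun i => f i (X l) (Y l) (Z l)) (N l)).
Proof.
  intros Hf HN HX HY HZ.
  exact (recursive_bsum Hf HN
           (Forall_cons _ HX (Forall_cons _ HY (Forall_cons _ HZ (Forall_nil _))))).
Qed.

Lemma recursive_mul A B : recursive A -> recursive B -> recursive (fun l => A l * B l).
Proof.
  intros HA HB.
  eapply recursive_ext; [| exact (recursive_bsum1 (fun _ x => x) (recursive_proj 1) HB HA)].
  intro l; simpl; rewrite bsum_const; lia.
Qed.

(* Case distinctions are arithmetised with a selector [e] in {0, 1}. *)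
Lemma recursive_select E A B : recursive E -> recursive A -> recursive B ->
  recursive (fun l => A l * E l + B l * (1 - E l)).
Proof.
  intros HE HA HB; apply recursive_add; apply recursive_mul; auto.
  apply recursive_sub; auto using recursive_const.
Qed.

Lemma recursive_ifeq X Y A B : recursive X -> recursive Y -> recursive A -> recursive B ->
  recursive (fun l => if X l =? Y l then A l else B l).
Proof.
  intros HX HY HA HB.
  assert (HE : recursive (fun l => 1 - ((X l - Y l) + (Y l - X l))))
    by (apply recursive_sub; [apply recursive_const | apply recursive_add; apply recursive_sub; auto]).
  eapply recursive_ext; [| exact (recursive_select HE HA HB)].
  intro l; cbv beta; destruct (Nat.eqb_spec (X l) (Y l)).
  - replace (1 - (X l - Y l + (Y l - X l))) with 1 by lia; lia.
  - replace (1 - (X l - Y l + (Y l - X l))) with 0 by lia; lia.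
Qed.

Lemma recursive_ifle X Y A B : recursive X -> recursive Y -> recursive A -> recursive B ->
  recursive (fun l => if X l <=? Y l then A l else B l).
Proof.
  intros HX HY HA HB.
  assert (HE : recursive (fun l => 1 - (X l - Y l)))
    by (apply recursive_sub; [apply recursive_const | apply recursive_sub; auto]).
  eapply recursive_ext; [| exact (recursive_select HE HA HB)].
  intro l; cbv beta; destruct (Nat.leb_spec (X l) (Y l)).
  - replace (1 - (X l - Y l)) with 1 by lia; lia.
  - replace (1 - (X l - Y l)) with 0 by lia; lia.
Qed.

Lemma div_as_bsum x y : y <> 0 -> x / y = bsum (fun t => if S t * y <=? x then 1 else 0) x.
Proof.
  intro Hy; pose proof (Nat.div_mod_eq x y); pose proof (Nat.mod_upper_bound x y Hy).
  replace (x / y) with (Nat.min (x / y) x) at 1 by nia.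
  rewrite <- bsum_indicator; apply bsum_ext; intros t _.
  destruct (Nat.leb_spec (S t * y) x), (Nat.ltb_spec t (x / y)); auto; nia.
Qed.

Lemma recursive_div A B : recursive A -> recursive B -> recursive (fun l => A l / B l).
Proof.
  intros HA HB.
  eapply recursive_ext with
    (F := fun l => if B l =? 0 then 0 else bsum (fun t => if S t * B l <=? A l then 1 else 0) (A l)).
  { intro l; destruct (Nat.eqb_spec (B l) 0) as [E|E];
      [rewrite E; reflexivity | symmetry; apply div_as_bsum; exact E]. }
  apply recursive_ifeq; auto using recursive_const.
  apply (recursive_bsum2 (fun t x y => if S t * y <=? x then 1 else 0)); auto.
  apply recursive_ifle; auto using recursive_proj, recursive_const.
  apply recursive_mul; [apply recursive_succ|]; apply recursive_proj.
Qed.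

Lemma recursive_mod A B : recursive A -> recursive B -> recursive (fun l => A l mod B l).
Proof.
  intros HA HB; eapply recursive_ext; [intro l; symmetry; apply Nat.Div0.mod_eq|].
  apply recursive_sub, recursive_mul, recursive_div; auto.
Qed.

Lemma recursive_pow2 A : recursive A -> recursive (fun l => 2 ^ A l).
Proof.
  intro HA.
  eapply recursive_ext;
    [| exact (recursive_iter (fun r => r + r)
                (recursive_add (recursive_proj 0) (recursive_proj 0)) HA (recursive_const 1))].
  intro l; simpl; induction (A l) as [|n IH]; simpl; [reflexivity | rewrite IH; lia].
Qed.

Ltac recursive_extra := fail.
Ltac recursive_solve :=
  repeat first
    [ recursive_extra | apply recursive_const | apply recursive_proj
    | apply recursive_div | apply recursive_mod | apply recursive_pow2
    | apply recursive_ifeq | apply recursive_ifle | apply recursive_succ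
    | apply recursive_add | apply recursive_sub | apply recursive_mul
    | apply recursive_pred | assumption ].

Definition tri s := bsum (fun t => t) (S s).

Lemma tri_double s : 2 * tri s = s * (s + 1).
Proof. induction s; [reflexivity|]; change (tri (S s)) with (tri s + S s); nia. Qed.

Lemma tri_mono a b : a <= b -> tri a <= tri b.
Proof. induction 1; auto; change (tri (S m)) with (tri m + S m); lia. Qed.

Lemma cpair_tri x y : cpair x y = tri (x + y) + y.
Proof.
  unfold cpair; f_equal; rewrite <- tri_double, Nat.mul_comm; apply Nat.div_mul; lia.
Qed.

(* [diag z] is the index of the antidiagonal containing [z]. *)
Definition diag z := bsum (fun t => if tri (S t) <=? z then 1 else 0) z.

Lemma diag_spec s z : tri s <= z < tri (S s) -> diag z = s.
Proof.
  intros [H1 H2]; unfold diag.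
  assert (Hs : s <= z) by (pose proof (@bsum_ge (fun t => t) (S s) s ltac:(lia)); unfold tri in *; lia).
  transitivity (Nat.min s z); [|lia]; rewrite <- bsum_indicator.
  apply bsum_ext; intros t _.
  destruct (Nat.leb_spec (tri (S t)) z), (Nat.ltb_spec t s); auto.
  - pose proof (@tri_mono (S s) (S t)); lia.
  - pose proof (@tri_mono (S t) s); lia.
Qed.

Definition csnd z := z - tri (diag z).
Definition cfst z := diag z - csnd z.

Lemma diag_cpair x y : diag (cpair x y) = x + y.
Proof.
  rewrite cpair_tri; apply diag_spec.
  change (tri (S (x + y))) with (tri (x + y) + S (x + y)); lia.
Qed.

Lemma csnd_cpair x y : csnd (cpair x y) = y.
Proof. unfold csnd; rewrite diag_cpair, cpair_tri; lia. Qed.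

Lemma cfst_cpair x y : cfst (cpair x y) = x.
Proof. unfold cfst; rewrite diag_cpair, csnd_cpair; lia. Qed.

Lemma recursive_tri A : recursive A -> recursive (fun l => tri (A l)).
Proof.
  intro HA; apply (recursive_bsum0 (fun t => t)); recursive_solve.
Qed.

Lemma recursive_diag A : recursive A -> recursive (fun l => diag (A l)).
Proof.
  intro HA; apply (recursive_bsum1 (fun t z => if tri (S t) <=? z then 1 else 0)); auto.
  apply recursive_ifle; [apply recursive_tri | ..]; recursive_solve.
Qed.

Lemma recursive_csnd A : recursive A -> recursive (fun l => csnd (A l)).
Proof. intro HA; apply recursive_sub; [| apply recursive_tri, recursive_diag]; auto. Qed.

Lemma recursive_cfst A : recursive A -> recursive (fun l => cfst (A l)).
Proof. intro HA; apply recursive_sub; [apply recursive_diag | apply recursive_csnd]; auto. Qed.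

Definition code_tail c := csnd (c - 1).
Definition code_drop k c := Nat.iter k code_tail c.
Definition code_nth k c := cfst (code_drop k c - 1).

Lemma code_drop_lcode k l : code_drop k (lcode l) = lcode (skipn k l).
Proof.
  unfold code_drop; revert l; induction k as [|k IH]; intro l; auto.
  rewrite Nat.iter_succ_r; destruct l as [|a l]; simpl.
  - clear IH; induction k as [|k IH]; simpl; [reflexivity | rewrite IH; reflexivity].
  - unfold code_tail; simpl; rewrite ?Nat.sub_0_r, csnd_cpair; apply IH.
Qed.

Lemma bprefix_length p k : length (bprefix p k) = k.
Proof. unfold bprefix; rewrite length_map, length_seq; auto. Qed.

Lemma lcode_skipn_neq0 k l : lcode (skipn k l) <> 0 <-> k < length l.
Proof.
  revert l; induction k as [|k IH]; intros [|a l]; simpl; try (split; lia).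
  rewrite IH; lia.
Qed.

Lemma code_drop_bprefix p k i : code_drop i (lcode (bprefix p k)) <> 0 <-> i < k.
Proof. rewrite code_drop_lcode, lcode_skipn_neq0, bprefix_length; reflexivity. Qed.

Lemma skipn_nth_cons (l : list nat) i : i < length l -> skipn i l = nth i l 0 :: skipn (S i) l.
Proof. revert l; induction i as [|i IH]; intros [|a l] H; simpl in *; try lia; auto with arith. Qed.

Lemma code_nth_bprefix p k i : i < k -> code_nth i (lcode (bprefix p k)) = p i.
Proof.
  intro H; unfold code_nth; rewrite code_drop_lcode, skipn_nth_cons by (rewrite bprefix_length; auto).
  simpl; rewrite Nat.sub_0_r, cfst_cpair; unfold bprefix.
  rewrite nth_indep with (d' := p 0) by (rewrite length_map, length_seq; auto).
  rewrite map_nth, seq_nth; auto.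
Qed.

Lemma recursive_code_drop A B : recursive A -> recursive B -> recursive (fun l => code_drop (A l) (B l)).
Proof.
  intros HA HB; apply recursive_iter; auto.
  apply recursive_csnd; recursive_solve.
Qed.

Lemma recursive_code_nth A B : recursive A -> recursive B -> recursive (fun l => code_nth (A l) (B l)).
Proof. intros HA HB; apply recursive_cfst; recursive_solve; apply recursive_code_drop; auto. Qed.

Ltac recursive_extra ::= first
  [ apply recursive_code_drop | apply recursive_code_nth | apply recursive_cfst | apply recursive_csnd ].

(** * Computable maps reading finite prefixes *)

(* The machine waits until [need n] symbols of the input are available and then
   outputs [f p n]; this is correct when [f p n] only depends on that prefix. *)
Lemma computable_of_prefix (f : baire -> nat -> nat) (need : nat -> nat) :
  recursive (fun l => need (nth 1 l 0)) ->
  recursive (fun l => f (fun a => code_nth a (nth 0 l 0)) (nth 1 l 0)) ->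
  (forall p p' n, (forall a, a < need n -> p a = p' a) -> f p n = f p' n) ->
  computable (fun p => Some (f p)).
Proof.
  intros Hneed Hf Hprefix.
  set (h := fun c n => if code_drop (need n) c =? 0 then 0 else S (f (fun a => code_nth a c) n)).
  assert (Hh : recursive (fun l => h (nth 0 l 0) (nth 1 l 0))) by (unfold h; recursive_solve).
  destruct Hh as [c Hc]; exists h; split; [exists c; intros a b; exact (Hc [a; b]) |].
  intros p q [= <-] n; split.
  - exists (S (need n)); unfold h.
    destruct (Nat.eqb_spec (code_drop (need n) (lcode (bprefix p (S (need n))))) 0) as [E|E];
      [exfalso; revert E; apply code_drop_bprefix; lia | lia].
  - intros k Hk; unfold h in *.
    destruct (Nat.eqb_spec (code_drop (need n) (lcode (bprefix p k))) 0) as [E|E]; [lia|].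
    apply code_drop_bprefix in E; f_equal; apply Hprefix; intros a Ha; apply code_nth_bprefix; lia.
Qed.

Lemma bpair_even f g m : bpair f g (2 * m) = f m.
Proof. unfold bpair; rewrite Nat.even_even, Nat.div2_double; reflexivity. Qed.

Lemma bpair_odd f g m : bpair f g (2 * m + 1) = g m.
Proof. unfold bpair; rewrite Nat.even_odd, Nat.div2_odd'; reflexivity. Qed.

Lemma div_mod_2 m b : b < 2 -> (2 * m + b) / 2 = m /\ (2 * m + b) mod 2 = b.
Proof. intro Hb; split; symmetry; [apply Nat.div_unique with b | apply Nat.mod_unique with m]; lia. Qed.

Lemma bpair_spec f g n : bpair f g n = if n mod 2 =? 0 then f (n / 2) else g (n / 2).
Proof.
  destruct (Nat.Even_or_Odd n) as [[m ->]|[m ->]].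
  - destruct (@div_mod_2 m 0 ltac:(lia)) as [Hq Hr]; rewrite Nat.add_0_r in Hq, Hr.
    rewrite bpair_even, Hq, Hr; reflexivity.
  - destruct (@div_mod_2 m 1 ltac:(lia)) as [Hq Hr]; rewrite bpair_odd, Hq, Hr; reflexivity.
Qed.

Lemma pair_with_ones_computable : computable (fun p => Some (bpair (fun _ => 1) p)).
Proof.
  apply computable_of_prefix with (need := fun n => S (n / 2)).
  - recursive_solve.
  - eapply recursive_ext; [intro l; symmetry; apply bpair_spec | recursive_solve].
  - intros p p' n Hp; rewrite !bpair_spec, Hp by lia; reflexivity.
Qed.

(* On [u = <p, r>], [u 1] is [r 0], the code of the oracle's answer. *)
Definition answer (a b : nat) (u : baire) : baire := fun _ => if u 1 =? 1 then a else b.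

Lemma answer_computable a b : computable (fun u => Some (answer a b u)).
Proof.
  apply computable_of_prefix with (need := fun _ => 2); unfold answer; [recursive_solve ..|].
  intros p p' n Hp; rewrite Hp; auto.
Qed.

(** * LPO reduces to Win_A *)

Lemma cprefix_S x n : cprefix x (S n) = cprefix x n ++ [x n].
Proof. unfold cprefix; rewrite seq_S, map_app; reflexivity. Qed.

Lemma cprefix_length x n : length (cprefix x n) = n.
Proof. unfold cprefix; rewrite length_map, length_seq; reflexivity. Qed.

Lemma consistent_play_exists d i s : exists x, consistent d i s x.
Proof.
  set (history := fix history n := match n with 0 => [] | S k => history k ++ [s (history k)] end).
  exists (fun n => s (history n)).
  assert (E : forall n, cprefix (fun n => s (history n)) n = history n)
    by (induction n; auto; rewrite cprefix_S, IHn; reflexivity).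
  intros n _; rewrite E; reflexivity.
Qed.

(* The winning set is everything or empty, hence closed. *)
Definition zero_test_game (x : nat -> bool) : game :=
  {| turn := fun _ => P1; win1 := fun _ => forall n, x n = false |}.

Lemma zero_test_game_names p x :
  names Cantor p x -> game_names (bpair (fun _ => 1) p) (zero_test_game x).
Proof.
  cbn; intro Hp; split.
  - intro w; left; unfold bfst; rewrite bpair_even; auto.
  - intro y; cbn; unfold bsnd; split.
    + intros Hx n w E; rewrite bpair_odd, Hp, Hx in E; discriminate.
    + intros H n; specialize (H n []); rewrite bpair_odd, Hp in H.
      destruct (x n); auto; exfalso; apply (H eq_refl); reflexivity.
Qed.

Lemma zero_test_game_P1 x s :
  winning_strategy (zero_test_game x) P1 s -> forall n, x n = false.
Proof.
  intro Hs; destruct (consistent_play_exists (fun _ => P1) P1 s) as [y Hy]; exact (Hs y Hy).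
Qed.

Lemma zero_test_game_P2 x s :
  winning_strategy (zero_test_game x) P2 s -> ~ forall n, x n = false.
Proof. intro Hs; apply (Hs (fun _ => false)); discriminate. Qed.

Lemma zero_test_game_determined x : exists i s, winning_strategy (zero_test_game x) i s.
Proof.
  destruct (classic (forall n, x n = false)) as [H|H];
    [exists P1 | exists P2]; exists (fun _ => false); intros y _; exact H.
Qed.

Lemma LPO_le_Win : W_le LPO Win_A.
Proof.
  exists (fun p => Some (bpair (fun _ => 1) p)), (fun u => Some (answer 1 0 u)).
  split; [apply pair_with_ones_computable | split; [apply answer_computable |]].
  intros G HG p x Hpx _.
  pose proof (zero_test_game_names Hpx) as Hn.
  set (g := exist _ (zero_test_game x) (ex_intro (fun q => game_names q _) _ Hn) : ClosedGames).
  destruct (HG _ g Hn (zero_test_game_determined x)) as [q [-> [i [Hi [s Hs]]]]].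
  cbn in Hi; exists (answer 1 0 (bpair p q)); split; [reflexivity|].
  exists (match i with P1 => true | P2 => false end).
  destruct i; unfold answer; cbn; rewrite Hi; split; try reflexivity.
  - split; [intros _; exact (zero_test_game_P1 Hs) | reflexivity].
  - split; [discriminate | intro H; contradiction (zero_test_game_P2 Hs H)].
Qed.

Lemma widx_snoc w b : widx (w ++ [b]) = 2 * widx w + 1 + (if b then 1 else 0).
Proof.
  set (step := fun a (b : bool) => 2 * a + (if b then 1 else 0)).
  assert (Hge : forall u a, a <= fold_left step u a)
    by (intro u; induction u as [|c u IH]; intro a; simpl; auto;
        specialize (IH (step a c)); unfold step in *; lia).
  unfold widx; fold step; rewrite fold_left_app; pose proof (Hge w 1).
  cbn [fold_left]; set (F := fold_left step w 1) in *; unfold step; destruct b; lia.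
Qed.

Lemma widx_bounds w : 2 ^ length w <= S (widx w) < 2 ^ S (length w).
Proof.
  induction w as [|b w IH] using rev_ind; [cbv; lia|].
  rewrite widx_snoc, length_app, Nat.add_1_r; simpl (2 ^ S _) in *; destruct b; lia.
Qed.

Lemma pow2_window_unique n k i : 2 ^ n <= S i < 2 ^ S n -> 2 ^ k <= S i < 2 ^ S k -> n = k.
Proof.
  intros H1 H2; destruct (Nat.lt_trichotomy n k) as [H|[H|H]]; auto; exfalso.
  - pose proof (@Nat.pow_le_mono_r 2 (S n) k ltac:(lia) H); lia.
  - pose proof (@Nat.pow_le_mono_r 2 (S k) n ltac:(lia) H); lia.
Qed.

Lemma widx_length_eq w w' : widx w = widx w' -> length w = length w'.
Proof. intro E; apply (@pow2_window_unique _ _ (widx w)); [|rewrite E]; apply widx_bounds. Qed.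

Lemma widx_inj w w' : widx w = widx w' -> w = w'.
Proof.
  intro E; pose proof (widx_length_eq _ _ E) as L; revert w' E L.
  induction w as [|b w IH] using rev_ind; intros w' E L;
    destruct w' as [|b' w' _] using rev_ind; rewrite ?length_app in L; simpl in L; try lia; auto.
  rewrite !widx_snoc in E; assert (b = b') by (destruct b, b'; auto; lia); subst b'.
  f_equal; apply IH; lia.
Qed.

Lemma widx_surj i : exists w, widx w = i.
Proof.
  induction i as [[|i] IH] using lt_wf_ind; [exists []; reflexivity|].
  destruct (Nat.Even_or_Odd i) as [[a ->]|[a ->]]; destruct (IH a ltac:(lia)) as [w Hw].
  - exists (w ++ [false]); rewrite widx_snoc, Hw; lia.
  - exists (w ++ [true]); rewrite widx_snoc, Hw; lia.
Qed.

Definition word_of (i : nat) : list bool :=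
  proj1_sig (constructive_indefinite_description _ (widx_surj i)).

Lemma widx_word_of i : widx (word_of i) = i.
Proof. exact (proj2_sig (constructive_indefinite_description _ (widx_surj i))). Qed.

Lemma word_of_widx w : word_of (widx w) = w.
Proof. apply widx_inj, widx_word_of. Qed.

Lemma firstn_S_snoc (v : list bool) k : k < length v -> firstn (S k) v = firstn k v ++ [nth k v false].
Proof.
  revert k; induction v as [|a v IH]; intros [|k] H; simpl in *; try lia; auto.
  rewrite IH by lia; reflexivity.
Qed.

Lemma firstn_cprefix x m k : k <= m -> firstn k (cprefix x m) = cprefix x k.
Proof.
  intro H; unfold cprefix; replace m with (k + (m - k)) by lia.
  rewrite seq_app, map_app, firstn_app, length_map, length_seq, Nat.sub_diag, app_nil_r.
  apply firstn_all2; rewrite length_map, length_seq; lia.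
Qed.

Lemma nth_cprefix x m t : t < m -> nth t (cprefix x m) false = x t.
Proof.
  intro H; unfold cprefix; rewrite nth_indep with (d' := x 0) by (rewrite length_map, length_seq; auto).
  rewrite map_nth, seq_nth; auto.
Qed.

Definition parent i := (i - 1) / 2.
Definition ancestor t i := Nat.iter t parent i.
Definition last_letter i := if i mod 2 =? 0 then 1 else 0.

Lemma parent_snoc w b : parent (widx (w ++ [b])) = widx w.
Proof.
  unfold parent; rewrite widx_snoc.
  replace (2 * widx w + 1 + (if b then 1 else 0) - 1) with (2 * widx w + (if b then 1 else 0)) by lia.
  apply div_mod_2; destruct b; lia.
Qed.

Lemma last_letter_snoc w b : last_letter (widx (w ++ [b])) = if b then 1 else 0.
Proof.
  unfold last_letter; rewrite widx_snoc; destruct b.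
  - replace (2 * widx w + 1 + 1) with (2 * (widx w + 1) + 0) by lia.
    rewrite (proj2 (@div_mod_2 _ 0 ltac:(lia))); auto.
  - rewrite Nat.add_0_r, (proj2 (@div_mod_2 _ 1 ltac:(lia))); auto.
Qed.

Lemma ancestor_firstn v t : t <= length v -> ancestor t (widx v) = widx (firstn (length v - t) v).
Proof.
  induction t as [|t IH]; intro H.
  - rewrite Nat.sub_0_r, firstn_all; reflexivity.
  - unfold ancestor in *; rewrite Nat.iter_succ, IH by lia.
    replace (length v - t) with (S (length v - S t)) by lia.
    rewrite firstn_S_snoc by lia; apply parent_snoc.
Qed.

Lemma ancestor_le t i : ancestor t i <= i.
Proof.
  unfold ancestor; induction t as [|t IH]; simpl; auto.
  unfold parent at 1.
  pose proof (@Nat.Div0.div_le_upper_bound (Nat.iter t parent i - 1) 2 (Nat.iter t parent i)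
                ltac:(lia)); lia.
Qed.

(** * Checking a coded strategy against the first cylinders *)

Definition bit s a := (s / 2 ^ a) mod 2.

Lemma bit_01 s a : bit s a = 0 \/ bit s a = 1.
Proof. unfold bit; pose proof (Nat.mod_upper_bound (s / 2 ^ a) 2 ltac:(lia)); lia. Qed.

Lemma bit_bsum (g : nat -> nat) N : (forall a, g a <= 1) ->
  bsum (fun a => 2 ^ a * g a) N < 2 ^ N /\
  forall a, a < N -> bit (bsum (fun a => 2 ^ a * g a) N) a = g a.
Proof.
  intro Hg; induction N as [|N [IH1 IH2]]; [simpl; split; intros; lia|].
  simpl bsum; split; [specialize (Hg N); simpl; nia|].
  intros a Ha; unfold bit; destruct (Nat.eq_dec a N) as [->|Hne].
  - rewrite Nat.mul_comm, Nat.div_add, Nat.div_small, Nat.add_0_l by (auto; apply Nat.pow_nonzero; lia).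
    apply Nat.mod_small; specialize (Hg N); lia.
  - assert (E : 2 ^ N = 2 ^ a * 2 * 2 ^ (N - S a))
      by (rewrite <- Nat.mul_assoc, <- Nat.pow_succ_r', <- Nat.pow_add_r; f_equal; lia).
    replace (2 ^ N * g N) with ((2 ^ (N - S a) * g N) * 2 * 2 ^ a) by (rewrite E; ring).
    rewrite Nat.div_add, Nat.Div0.mod_add by (apply Nat.pow_nonzero; lia); apply IH2; lia.
Qed.

Definition bits_strategy (s : nat) (w : list bool) : bool := bit s (widx w) =? 1.

Lemma bits_strategy_encode (st : list bool -> bool) M :
  exists s, forall w, length w < M -> bits_strategy s w = st w.
Proof.
  set (g := fun a => if st (word_of a) then 1 else 0).
  assert (Hg : forall a, g a <= 1) by (intro a; unfold g; destruct (st _); lia).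
  exists (bsum (fun a => 2 ^ a * g a) (2 ^ M)); intros w Hw; unfold bits_strategy.
  rewrite (proj2 (bit_bsum g (2 ^ M) Hg)).
  - unfold g; rewrite word_of_widx; destruct (st w); reflexivity.
  - pose proof (widx_bounds w); pose proof (@Nat.pow_le_mono_r 2 (S (length w)) M ltac:(lia) Hw); lia.
Qed.

Definition respects (d : list bool -> player) (st : list bool -> bool) (v : list bool) : Prop :=
  forall t, t < length v -> d (firstn t v) = P2 -> nth t v false = st (firstn t v).

Lemma consistent_respects d st x m : consistent d P2 st x -> respects d st (cprefix x m).
Proof.
  intros Hx t Ht; rewrite cprefix_length in Ht.
  rewrite firstn_cprefix, nth_cprefix by lia; apply Hx.
Qed.

Definition covered (q : baire) (m : nat) (v : list bool) : Prop :=
  exists j, j < m /\ exists t, t <= length v /\ q j = S (widx (firstn t v)).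

Lemma covered_not_in_closed q A m x : closed_names q A -> covered q m (cprefix x m) -> ~ A x.
Proof.
  intros Hq [j [_ [t [Ht E]]]] HA; rewrite cprefix_length in Ht.
  rewrite firstn_cprefix in E by lia.
  apply (proj1 (Hq x) HA j _ E); rewrite cprefix_length; reflexivity.
Qed.

Lemma covered_mono q m m' v : m <= m' -> covered q m v -> covered q m' v.
Proof. intros H [j [Hj R]]; exists j; split; auto; lia. Qed.

Definition all_below N (f : nat -> nat) : nat :=
  if bsum (fun t => if f t =? 0 then 1 else 0) N =? 0 then 1 else 0.

Lemma all_below_spec N f : all_below N f = 1 <-> forall t, t < N -> f t <> 0.
Proof.
  unfold all_below; destruct (Nat.eqb_spec (bsum (fun t => if f t =? 0 then 1 else 0) N) 0) as [E|E].
  - rewrite bsum_eq0 in E; split; auto; intros _ t Ht; specialize (E t Ht); cbv beta in E.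
    destruct (Nat.eqb_spec (f t) 0); [discriminate | auto].
  - split; [discriminate|]; intro H; exfalso; apply E, bsum_eq0; intros t Ht.
    destruct (Nat.eqb_spec (f t) 0) as [Z|Z]; auto; exfalso; exact (H t Ht Z).
Qed.

Lemma all_below_01 N f : all_below N f = 0 \/ all_below N f = 1.
Proof. unfold all_below; destruct (_ =? _); auto. Qed.

(* In the following, [P] is a game name: [P (2 a) = 2] iff player 2 moves at the word
   with index [a], and [P (2 j + 1) = S a] iff the word with index [a] is the [j]-th
   enumerated cylinder. [move_ok P s i t] checks the move into the ancestor at distance
   [t] of the word with index [i]. *)
Definition move_ok (P : nat -> nat) (s i t : nat) : nat :=
  if P (2 * ancestor (S t) i) =? 2
  then if last_letter (ancestor t i) =? bit s (ancestor (S t) i) then 1 else 0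
  else 1.

Definition respects_bits P m s i := all_below m (move_ok P s i).

Definition cover_hit (P : nat -> nat) j i t := if P (2 * j + 1) =? S (ancestor t i) then 1 else 0.

Definition cover_count P m i := bsum (fun j => bsum (cover_hit P j i) (S m)) m.

(* Indices [i] with [2 ^ m <= S i < 2 ^ S m] are exactly those of the words of length [m]. *)
Definition word_ok P m s i :=
  if S i <? 2 ^ m then 1 else if 2 ^ S m <=? S i then 1
  else if respects_bits P m s i =? 0 then 1 else if cover_count P m i =? 0 then 0 else 1.

Definition check_strategy P m s := all_below (2 ^ S m) (word_ok P m s).

Lemma turn_code p G w : game_names p G -> (p (2 * widx w) = 2 <-> turn G w = P2).
Proof.
  intros [Hd _]; destruct (Hd w) as [[E T]|[E T]]; unfold bfst in E; rewrite E, T; split; congruence.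
Qed.

Lemma move_ok_spec p G s v k : game_names p G -> k < length v ->
  (move_ok p s (widx v) (length v - S k) <> 0 <->
   (turn G (firstn k v) = P2 -> nth k v false = bits_strategy s (firstn k v))).
Proof.
  intros Hn Hk; unfold move_ok, bits_strategy.
  rewrite !ancestor_firstn by lia.
  replace (length v - S (length v - S k)) with k by lia.
  replace (length v - (length v - S k)) with (S k) by lia.
  rewrite firstn_S_snoc, last_letter_snoc by lia.
  destruct (Nat.eqb_spec (p (2 * widx (firstn k v))) 2) as [T|T].
  - apply (turn_code _ Hn) in T; rewrite T.
    destruct (nth k v false), (bit_01 s (widx (firstn k v))) as [B|B]; rewrite B; cbn;
      split; intros; try congruence; discriminate (H eq_refl).
  - split; [intros _ Hturn; exfalso; apply T, (turn_code _ Hn), Hturn | lia].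
Qed.

Lemma respects_bits_spec p G s v : game_names p G ->
  respects_bits p (length v) s (widx v) = 1 <-> respects (turn G) (bits_strategy s) v.
Proof.
  intro Hn; unfold respects_bits; rewrite all_below_spec; split.
  - intros H k Hk; apply (move_ok_spec s v Hn Hk), H; lia.
  - intros H t Ht; replace t with (length v - S (length v - S t)) by lia.
    apply (@move_ok_spec p G s v (length v - S t) Hn ltac:(lia)), H; lia.
Qed.

Lemma cover_count_spec p v :
  cover_count p (length v) (widx v) <> 0 <-> covered (bsnd p) (length v) v.
Proof.
  unfold cover_count, covered, bsnd; split.
  - intro H; apply bsum_neq0 in H as [j [Hj H]]; apply bsum_neq0 in H as [t [Ht H]].
    unfold cover_hit in H; destruct (Nat.eqb_spec (p (2 * j + 1)) (S (ancestor t (widx v)))) as [E|E];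
      [|lia].
    rewrite ancestor_firstn in E by lia.
    exists j; split; auto; exists (length v - t); split; [lia | exact E].
  - intros [j [Hj [t [Ht E]]]].
    assert (Hhit : cover_hit p j (widx v) (length v - t) = 1).
    { unfold cover_hit; rewrite ancestor_firstn by lia.
      replace (length v - (length v - t)) with t by lia; rewrite E, Nat.eqb_refl; reflexivity. }
    pose proof (@bsum_ge (cover_hit p j (widx v)) (S (length v)) (length v - t) ltac:(lia)).
    pose proof (@bsum_ge (fun j => bsum (cover_hit p j (widx v)) (S (length v))) _ j Hj); cbv beta in *.
    lia.
Qed.

Lemma word_ok_word p s v :
  word_ok p (length v) s (widx v) =
  if respects_bits p (length v) s (widx v) =? 0 then 1
  else if cover_count p (length v) (widx v) =? 0 then 0 else 1.
Proof.
  pose proof (widx_bounds v); unfold word_ok.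
  destruct (Nat.ltb_spec (S (widx v)) (2 ^ length v)); [lia|].
  destruct (Nat.leb_spec (2 ^ S (length v)) (S (widx v))); [lia | reflexivity].
Qed.

Lemma check_strategy_spec p G m s : game_names p G ->
  check_strategy p m s = 1 <->
  forall v, length v = m -> respects (turn G) (bits_strategy s) v -> covered (bsnd p) m v.
Proof.
  intro Hn; unfold check_strategy; rewrite all_below_spec; split.
  - intros H v <- Hr; apply cover_count_spec.
    pose proof (widx_bounds v) as B; specialize (H (widx v) ltac:(lia)).
    rewrite word_ok_word, (proj2 (respects_bits_spec s v Hn) Hr) in H; cbn in H.
    destruct (_ =? 0) eqn:E; [contradiction | apply Nat.eqb_neq, E].
  - intros H i Hi; destruct (widx_surj i) as [v <-].
    destruct (Nat.eq_dec (length v) m) as [<-|Hm].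
    + rewrite word_ok_word.
      destruct (all_below_01 (length v) (move_ok p s (widx v))) as [R|R];
        fold (respects_bits p (length v) s (widx v)) in R; rewrite R; [cbn; lia|].
      apply (respects_bits_spec s v Hn), H, cover_count_spec in R; auto.
      cbn; destruct (Nat.eqb_spec (cover_count p (length v) (widx v)) 0); [contradiction | lia].
    + pose proof (widx_bounds v); unfold word_ok.
      destruct (Nat.ltb_spec (S (widx v)) (2 ^ m)); [lia|].
      destruct (Nat.leb_spec (2 ^ S m) (S (widx v))); [lia|].
      exfalso; apply Hm, (@pow2_window_unique _ _ (widx v)); auto; lia.
Qed.

Lemma check_strategy_winning p G m s :
  game_names p G -> check_strategy p m s = 1 -> winning_strategy G P2 (bits_strategy s).
Proof.
  intros Hn Hc x Hx; apply (@covered_not_in_closed _ _ m x (proj2 Hn)).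
  apply (proj1 (check_strategy_spec m s Hn) Hc); [apply cprefix_length | apply consistent_respects, Hx].
Qed.

(** * Forcing a cover in finitely many moves *)

Fixpoint forces (d : list bool -> player) (q : baire) (m N : nat) (u : list bool) : Prop :=
  covered q m u \/
  match N with
  | 0 => False
  | S N' =>
      match d u with
      | P1 => forces d q m N' (u ++ [false]) /\ forces d q m N' (u ++ [true])
      | P2 => forces d q m N' (u ++ [false]) \/ forces d q m N' (u ++ [true])
      end
  end.

Lemma forces_mono d q m m' N N' u :
  m <= m' -> N <= N' -> forces d q m N u -> forces d q m' N' u.
Proof.
  intros Hm; revert N' u; induction N as [|N IH]; intros N' u HN H;
    destruct N' as [|N']; simpl in *;
    (destruct H as [Hc|H]; [left; exact (covered_mono Hm Hc) | right]); try lia; try contradiction.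
  destruct (d u); [destruct H; split | destruct H; [left|right]]; apply IH; auto; lia.
Qed.

Definition forced d q u := exists m N, forces d q m N u.

Lemma forced_P1 d q u :
  d u = P1 -> forced d q (u ++ [false]) -> forced d q (u ++ [true]) -> forced d q u.
Proof.
  intros T [m [N H]] [m' [N' H']]; exists (m + m'), (S (N + N')); right; rewrite T.
  split; [apply (@forces_mono d q m _ N) | apply (@forces_mono d q m' _ N')]; auto; lia.
Qed.

Lemma forced_P2 d q u b : d u = P2 -> forced d q (u ++ [b]) -> forced d q u.
Proof.
  intros T [m [N H]]; exists m, (S N); right; rewrite T; destruct b; auto.
Qed.

(* Player 1 keeps the history unforced: some successor is unforced at a move of player 1,
   and every successor is unforced at a move of player 2. *)
Lemma unforced_winning G q :
  closed_names q (win1 G) -> ~ forced (turn G) q [] -> exists s, winning_strategy G P1 s.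
Proof.
  intros Hq NF.
  exists (fun u =>
    if excluded_middle_informative (forced (turn G) q (u ++ [false])) then true else false).
  intros x Hx; cbn.
  assert (NFx : forall n, ~ forced (turn G) q (cprefix x n)).
  { induction n as [|n IH]; auto; rewrite cprefix_S; intro F; apply IH.
    destruct (turn G (cprefix x n)) eqn:T.
    - rewrite (Hx n T) in F.
      destruct (excluded_middle_informative (forced (turn G) q (cprefix x n ++ [false])));
        [apply forced_P1 | contradiction]; auto.
    - exact (forced_P2 _ _ T F). }
  apply Hq; intros n w E Ew; apply (NFx (length w)); rewrite Ew.
  exists (S n), 0; left; exists n; split; auto; exists (length w); split; auto.
  rewrite firstn_all; exact E.
Qed.

Lemma covered_extend q m u v : firstn (length u) v = u -> covered q m u -> covered q m v.
Proof.
  intros Pv [j [Hj [t [Ht E]]]]; exists j; split; auto; exists t.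
  assert (Hl : length u <= length v) by (rewrite <- Pv at 1; rewrite length_firstn; lia).
  split; [lia|]; rewrite <- Pv, firstn_firstn, Nat.min_l in E by lia; exact E.
Qed.

Section ForcingStrategy.

Variables (d : list bool -> player) (q : baire) (M : nat).

Definition forcing_move (u : list bool) : bool :=
  if excluded_middle_informative (forces d q M (M - length u - 1) (u ++ [true])) then true else false.

Lemma forcing_move_covers k u : length u + k = M -> forces d q M k u ->
  forall v, length v = M -> firstn (length u) v = u ->
  (forall t, length u <= t < M -> d (firstn t v) = P2 -> nth t v false = forcing_move (firstn t v)) ->
  covered q M v.
Proof.
  revert u; induction k as [|k IH]; intros u Hl HF v Lv Pv Cv;
    (destruct HF as [Hc|HF]; [eapply covered_extend; eassumption | try contradiction]).
  set (b := nth (length u) v false).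
  assert (Hnext : forces d q M k (u ++ [b]) -> covered q M v).
  { intro HF'; apply (IH (u ++ [b])); auto; rewrite ?length_app; cbn; [lia | |].
    - rewrite Nat.add_comm, firstn_S_snoc, Pv by lia; reflexivity.
    - intros t Ht; apply Cv; lia. }
  destruct (d u) eqn:T.
  - apply Hnext; destruct b; tauto.
  - assert (Eb : b = forcing_move u)
      by (unfold b; rewrite <- Pv at 2; apply Cv; [lia | rewrite Pv; exact T]).
    apply Hnext; unfold forcing_move in Eb; replace (M - length u - 1) with k in Eb by lia.
    destruct (excluded_middle_informative _), b; try discriminate; tauto.
Qed.

Lemma forcing_move_respects_covered :
  forces d q M M [] -> forall v, length v = M -> respects d forcing_move v -> covered q M v.
Proof. intros HF v Lv Hr; apply (@forcing_move_covers M []); auto; intros t Ht; apply Hr; lia. Qed.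

End ForcingStrategy.

Lemma respects_ext d st st' v :
  (forall w, length w < length v -> st w = st' w) -> respects d st v -> respects d st' v.
Proof.
  intros E H t Ht T; rewrite <- E by (rewrite firstn_length_le; lia); auto.
Qed.

Lemma forced_check_strategy p G :
  game_names p G -> forced (turn G) (bsnd p) [] -> exists m s, check_strategy p m s = 1.
Proof.
  intros Hn [m [N HF]].
  assert (HM : forces (turn G) (bsnd p) (m + N) (m + N) [])
    by (apply (@forces_mono _ _ m _ N); auto; lia).
  destruct (bits_strategy_encode (forcing_move (turn G) (bsnd p) (m + N)) (m + N)) as [s Hs].
  exists (m + N), s; apply (check_strategy_spec _ s Hn); intros v Lv Hr.
  apply (forcing_move_respects_covered HM Lv).
  apply (respects_ext (st := bits_strategy s)); auto; intros w Hw; apply Hs; lia.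
Qed.

Definition strategy_checks (P : baire) (n : nat) : nat := check_strategy P (cfst n) (csnd n).

Lemma all_below_ext N f f' : (forall t, t < N -> f t = f' t) -> all_below N f = all_below N f'.
Proof.
  intro H; unfold all_below; rewrite (bsum_ext _ (fun t => if f' t =? 0 then 1 else 0)); auto.
  intros t Ht; rewrite H; auto.
Qed.

Lemma check_strategy_prefix P P' m s :
  (forall a, a < 2 ^ S (S m) + 2 * m + 2 -> P a = P' a) -> check_strategy P m s = check_strategy P' m s.
Proof.
  intro H; apply all_below_ext; intros i Hi; simpl (2 ^ S (S m)) in H; simpl (2 ^ S m) in Hi.
  unfold word_ok, respects_bits, cover_count.
  rewrite (all_below_ext _ (move_ok P' s i)),
    (bsum_ext _ (fun j => bsum (cover_hit P' j i) (S m))); auto.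
  - intros j Hj; apply bsum_ext; intros t Ht; unfold cover_hit; rewrite H; auto; lia.
  - intros t Ht; unfold move_ok; rewrite H; auto.
    pose proof (ancestor_le (S t) i); lia.
Qed.

Lemma recursive_ancestor A B : recursive A -> recursive B -> recursive (fun l => ancestor (A l) (B l)).
Proof. intros HA HB; apply recursive_iter; auto; unfold parent; recursive_solve. Qed.

Lemma recursive_all_below f N X Y Z :
  recursive (fun a => f (nth 0 a 0) (nth 1 a 0) (nth 2 a 0) (nth 3 a 0)) ->
  recursive N -> recursive X -> recursive Y -> recursive Z ->
  recursive (fun l => all_below (N l) (fun t => f t (X l) (Y l) (Z l))).
Proof.
  intros Hf HN HX HY HZ; unfold all_below; apply recursive_ifeq; try apply recursive_const.
  apply (recursive_bsum3 (fun t x y z => if f t x y z =? 0 then 1 else 0)); auto; recursive_solve.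
Qed.

Ltac recursive_extra ::= first
  [ apply recursive_code_drop | apply recursive_code_nth | apply recursive_cfst | apply recursive_csnd
  | apply recursive_ancestor ].

Lemma recursive_respects_bits C M S I : recursive C -> recursive M -> recursive S -> recursive I ->
  recursive (fun l => respects_bits (fun a => code_nth a (C l)) (M l) (S l) (I l)).
Proof.
  intros; apply (recursive_all_below (fun t c s i => move_ok (fun a => code_nth a c) s i t)); auto.
  unfold move_ok, last_letter, bit; recursive_solve.
Qed.

Lemma recursive_cover_count C M I : recursive C -> recursive M -> recursive I ->
  recursive (fun l => cover_count (fun a => code_nth a (C l)) (M l) (I l)).
Proof.
  intros; apply (recursive_bsum3
                   (fun j c m i => bsum (cover_hit (fun a => code_nth a c) j i) (S m))); auto.
  apply (recursive_bsum3 (fun t c j i => cover_hit (fun a => code_nth a c) j i t));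
    [|recursive_solve ..].
  unfold cover_hit; recursive_solve.
Qed.

Ltac recursive_extra ::= first
  [ apply recursive_code_drop | apply recursive_code_nth | apply recursive_cfst | apply recursive_csnd
  | apply recursive_ancestor | apply recursive_respects_bits | apply recursive_cover_count ].

Lemma strategy_checks_computable : computable (fun p => Some (strategy_checks p)).
Proof.
  apply computable_of_prefix with (need := fun n => 2 ^ S (S (cfst n)) + 2 * cfst n + 2).
  - recursive_solve.
  - apply (recursive_all_below (fun i c m s => word_ok (fun a => code_nth a c) m s i));
      [unfold word_ok | recursive_solve ..].
    recursive_solve.
  - intros p p' n Hp; apply check_strategy_prefix, Hp.
Qed.

(** * Win_A reduces to LPO *)

Lemma LPO_total x : exists b, LPO x b.
Proof.
  destruct (classic (forall n, x n = false)) as [H|H].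
  - exists true; split; auto.
  - exists false; split; [discriminate | contradiction].
Qed.

Lemma Win_le_LPO : W_le Win_A LPO.
Proof.
  exists (fun p => Some (strategy_checks p)), (fun u => Some (answer 1 2 u)).
  split; [apply strategy_checks_computable | split; [apply answer_computable |]].
  intros L HL p g Hn _; cbn in Hn.
  set (x := fun n => strategy_checks p n =? 1).
  assert (Hx : names Cantor (strategy_checks p) x).
  { intro n; cbn; unfold x, strategy_checks, check_strategy.
    destruct (all_below_01 (2 ^ S (cfst n)) (word_ok p (cfst n) (csnd n))) as [E|E];
      rewrite E; reflexivity. }
  destruct (HL _ x Hx (LPO_total x)) as [r [-> [b [Hb Hlpo]]]].
  exists (answer 1 2 (bpair (strategy_checks p) r)); split; [reflexivity|].
  exists (if b then P1 else P2); unfold answer; cbn in Hb |- *; rewrite Hb.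
  destruct b; split; try reflexivity.
  - apply (unforced_winning _ (proj2 Hn)); intro F.
    destruct (forced_check_strategy Hn F) as [m [s Hc]].
    pose proof (proj1 Hlpo eq_refl (cpair m s)) as Hzero.
    unfold x, strategy_checks in Hzero; rewrite cfst_cpair, csnd_cpair, Hc in Hzero; discriminate.
  - assert (Hpos : exists n, x n = true).
    { apply NNPP; intro N; apply Bool.diff_false_true, Hlpo; intro n.
      destruct (x n) eqn:E; [exfalso; eauto | reflexivity]. }
    destruct Hpos as [n Hpos]; apply Nat.eqb_eq in Hpos.
    exists (bits_strategy (csnd n)); eapply check_strategy_winning; eassumption.
Qed.

Theorem proposition10 : W_equiv Win_A LPO.
Proof. split; [exact Win_le_LPO | exact LPO_le_Win]. Qed.
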